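(* There exists a constant $c>0$ and infinitely many pairs of integers $(n,\ell)$ with $1\le\ell<n$ such that $f(n,\ell)\ge c\,\frac{n}{\ell}\,\frac{\log n}{\log\log n}$. (For instance, one may take $n$ to be the product of the $k$ smallest primes and $\ell$ the smallest integer with $\pi(\ell)=k$.)
   Context: For integers $n\ge 2$ and $\ell\ge0$, a set $B\subseteq\mathbb{Z}_n$ is an $\ell$-covering set if $\{ab\bmod n: 0\le a\le\ell,\ b\in B\}=\mathbb{Z}_n$, and $f(n,\ell)$ is the minimum size of an $\ell$-covering set of $\mathbb{Z}_n$. $\pi$ is the prime counting function. Convention: $\log x$ denotes $\max(\ln x,1)$. *)

From mathcomp Require Import all_boot.
From Stdlib Require Import Reals.

Set Implicit Arguments.
Unset Strict Implicit.
Unset Printing Implicit Defensive.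

(* B ⊆ Z_n (elements represented by residues 0..n-1) is an l-covering set if
   { a*b mod n : 0 <= a <= l, b in B } = Z_n. *)
Definition covering (n l : nat) (B : {set 'I_n}) : bool :=
  [forall x : 'I_n, [exists a : 'I_l.+1, [exists b in B, (a * b) %% n == x]]].

(* f(n,l) = minimum size of an l-covering set of Z_n.  (Default value n when no
   covering set exists, which only happens for l = 0; irrelevant below.) *)
Definition fcov (n l : nat) : nat :=
  \big[minn/n]_(B : {set 'I_n} | covering l B) #|B|.

(* Convention of the paper: log x = max(ln x, 1). *)
Definition logm (x : R) : R := Rmax (ln x) 1.

(* Take l = K prime and n = primorial K, the product of the primes up to K.
   An l-covering set B of Z_n contains every unit x: writing x = a b mod n with
   0 <= a <= K, the factor a is coprime to n, so it has no prime factor <= K and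
   a = 1.  Hence f(n, K) >= phi(n) = n * prod_(p <= K) (1 - 1/p).  Chebyshev's
   bound theta(K) <= K ln 8 (primes in (m+1, 2m+1] divide 'C(2m+1, m)) and
   Legendre's formula give Mertens' estimate sum_(p <= K) ln p / p <= ln K + O(1);
   Abel summation turns it into sum_(p <= K) 1/p <= ln ln K + O(1), whence
   phi(n) >= c' n / ln K.  On the other side ln n = theta(K) <= K ln 8 and
   t / ln t is increasing for t >= e, so ln n / ln ln n <= K ln 8 / ln K. *)

From Pilot Require Import Defs.
From mathcomp Require Import all_boot.
From Stdlib Require Import Reals Lra.
From mathcomp Require Import zify.
(* Reals rebinds [_ ^ _] in nat_scope; restore ssrnat's [expn]. *)
Import ssrnat.

Set Implicit Arguments.
Unset Strict Implicit.
Unset Printing Implicit Defensive.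

(** * Primorials *)

Lemma prod_prime_pow_dvdn (s : seq nat) (e : nat -> nat) m :
  uniq s -> all prime s -> (forall p, p \in s -> p ^ e p %| m) ->
  \prod_(p <- s) p ^ e p %| m.
Proof.
elim: s => [|p s IHs]; first by rewrite big_nil dvd1n.
rewrite big_cons => /= /andP[p_s uniq_s] /andP[pr_p prime_s] dvd_m.
have co_p_s : coprime (p ^ e p) (\prod_(q <- s) q ^ e q).
  apply: coprimeXl; rewrite prime_coprime // Euclid_dvd_prod // big_has.
  apply/hasPn => q q_s; rewrite Euclid_dvdX // dvdn_prime2 ?(allP prime_s q q_s) //.
  by apply/nandP; left; apply: contraNneq p_s => ->.
rewrite Gauss_dvd // dvd_m ?mem_head //=.
by apply: IHs => // q q_s; apply: dvd_m; rewrite inE q_s orbT.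
Qed.

Lemma prod_primes_pow_dvdn a b (e : nat -> nat) m :
  (forall p, a <= p < b -> prime p -> p ^ e p %| m) ->
  \prod_(a <= p < b | prime p) p ^ e p %| m.
Proof.
move=> dvd_m; rewrite -big_filter; apply: prod_prime_pow_dvdn.
- by rewrite filter_uniq ?iota_uniq.
- exact: filter_all.
move=> p; rewrite mem_filter mem_iota => /and3P[pr_p a_p p_b].
by apply: dvd_m => //; rewrite a_p /=; lia.
Qed.

Definition primorial (K : nat) : nat := \prod_(0 <= p < K.+1 | prime p) p.

Lemma big_primes0 (F : nat -> nat) : \prod_(0 <= p < 1 | prime p) F p = 1.
Proof. by rewrite big_mkcond big_nat1. Qed.

Lemma big_primesS (F : nat -> nat) K :
  \prod_(0 <= p < K.+2 | prime p) F p =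
  (if prime K.+1 then F K.+1 else 1) * \prod_(0 <= p < K.+1 | prime p) F p.
Proof. by rewrite big_mkcond [in RHS]big_mkcond big_nat_recr //= mulnC. Qed.

Lemma primorial_gt0 K : 0 < primorial K.
Proof. by rewrite prodn_cond_gt0 // => p /prime_gt0. Qed.

Lemma primorial_prime K : prime K.+1 -> primorial K.+1 = K.+1 * primorial K.
Proof. by move=> K_pr; rewrite /primorial big_primesS K_pr. Qed.

Lemma primorial_nonprime K : ~~ prime K.+1 -> primorial K.+1 = primorial K.
Proof. by move=> /negbTE K_np; rewrite /primorial big_primesS K_np mul1n. Qed.

Lemma dvdn_primorial p K : prime p -> p <= K -> p %| primorial K.
Proof.
move=> pr_p p_K; rewrite /primorial big_mkcond.
rewrite (bigD1_seq p) ?mem_iota ?iota_uniq ?add0n ?ltnS //=.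
by rewrite pr_p dvdn_mulr.
Qed.

Lemma primorial_gt1 K : 2 <= K -> 1 < primorial K.
Proof. by move=> K2; rewrite dvdn_leq ?primorial_gt0 ?dvdn_primorial. Qed.

Lemma prime_dvd_primorial p K : prime p -> p %| primorial K -> p <= K.
Proof.
move=> pr_p; rewrite Euclid_dvd_prod // big_has_cond => /hasP[q].
by rewrite mem_iota => /andP[_ q_K] /andP[pr_q]; rewrite dvdn_prime2 // => /eqP->.
Qed.

Lemma coprime_primorial p K : prime p -> K < p -> coprime p (primorial K).
Proof.
move=> pr_p K_p; rewrite prime_coprime //.
by apply: contraTN K_p => /(prime_dvd_primorial pr_p); rewrite -leqNgt.
Qed.

Lemma coprime_primorial_eq1 a K :
  2 <= K -> a <= K -> coprime a (primorial K) -> a = 1.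
Proof.
move=> K2 a_K co_a; case: (ltngtP a 1) => [|a_gt1|] //.
  rewrite ltnS leqn0 => /eqP a0; move: co_a; rewrite a0 /coprime gcd0n.
  by have := primorial_gt1 K2; lia.
have pr_a := pdiv_prime a_gt1.
have := coprime_dvdl (pdiv_dvd a) co_a; rewrite prime_coprime //.
by rewrite dvdn_primorial // (leq_trans (pdiv_leq _) a_K) //; lia.
Qed.

Lemma totient_primorial K :
  totient (primorial K) = \prod_(0 <= p < K.+1 | prime p) p.-1.
Proof.
elim: K => [|K IHK]; first by rewrite /primorial !big_primes0.
rewrite big_primesS -IHK; case: (boolP (prime K.+1)) => [K_pr|K_np].
  by rewrite primorial_prime // totient_coprime ?coprime_primorial // totient_prime.
by rewrite primorial_nonprime // mul1n.
Qed.

(** * Chebyshev's bound and Legendre's formula *)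

Lemma prime_dvd_fact p k : prime p -> (p %| k`!) = (p <= k).
Proof.
move=> pr_p; apply/idP/idP => [|p_k]; last by rewrite dvdn_fact // prime_gt0.
elim: k => [|k IHk]; first by rewrite dvdn1 => /eqP p1; rewrite p1 in pr_p.
by rewrite factS Euclid_dvdM // => /orP[/dvdn_leq->|/IHk/leqW].
Qed.

Lemma primes_mid_dvd_bin m :
  \prod_(m.+2 <= p < m.*2.+2 | prime p) p %| 'C(m.*2.+1, m).
Proof.
apply: (prod_primes_pow_dvdn (e := fun=> 1)) => p /andP[m_p p_m] pr_p.
have := bin_fact (leqW (leq_addr m m)); rewrite -addnn -addSn addnK => fact_eq.
have : p %| (m + m).+1`! by rewrite prime_dvd_fact //; lia.
by rewrite -fact_eq 2?Euclid_dvdM // !prime_dvd_fact // => /or3P[//||]; lia.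
Qed.

Lemma bin_le_exp2 n m : 'C(n, m) <= 2 ^ n.
Proof.
elim: n m => [|n IHn] [|m] //; first by rewrite bin0 expn_gt0.
by rewrite binS expnS mul2n -addnn leq_add.
Qed.

Lemma primorial_odd_split m :
  primorial m.*2.+1 = primorial m.+1 * \prod_(m.+2 <= p < m.*2.+2 | prime p) p.
Proof. by rewrite /primorial (@big_cat_nat _ _ _ m.+2) //; lia. Qed.

Lemma primorial_le_exp8 K : primorial K <= 8 ^ K.
Proof.
elim/ltn_ind: K => K.
have [[m ->]|[m ->]] : (exists m, K = m.*2) \/ (exists m, K = m.*2.+1).
  by rewrite -(odd_double_half K); case: (odd K); [right|left]; exists K./2.
- case: m => [|[|m]] IHK; first by rewrite /primorial big_primes0.
    by rewrite primorial_prime //; apply: leq_trans (leq_mul (leqnn 2) (IHK 1 _)) _.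
  have not_prime : ~~ prime (m.*2.+3).+1.
    by apply/negP => /primeP[_ /(_ 2)]; rewrite dvdn2 /= odd_double => /(_ isT); lia.
  rewrite -[m.+2.*2]/(m.*2.+3).+1 primorial_nonprime //.
  by rewrite (leq_trans (IHK _ _)) // leq_exp2l.
- case: m => [|m] IHK; first by rewrite primorial_nonprime // /primorial big_primes0.
  have mid_le : \prod_(m.+3 <= p < (m.+1).*2.+2 | prime p) p <= 2 ^ (m.+1).*2.+1.
    rewrite (leq_trans (dvdn_leq _ (primes_mid_dvd_bin _))) ?bin_le_exp2 //.
    by rewrite bin_gt0; lia.
  rewrite primorial_odd_split (leq_trans (leq_mul (IHK m.+2 _) mid_le)) //; first lia.
  by rewrite -[8]/(2 ^ 3) -!expnM -expnD leq_exp2l //; lia.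
Qed.

Lemma prime_pow_dvd_fact p M : prime p -> p ^ (M %/ p) %| M`!.
Proof.
move=> pr_p; rewrite pfactor_dvdn ?fact_gt0 // logn_fact //.
case: M => [|M]; first by rewrite div0n.
by rewrite big_ltn // expn1 leq_addr.
Qed.

Lemma primes_pow_dvd_fact K M : \prod_(0 <= p < K.+1 | prime p) p ^ (M %/ p) %| M`!.
Proof. by apply: prod_primes_pow_dvdn => p _; apply: prime_pow_dvd_fact. Qed.

Lemma fact_le_expn M : M`! <= M ^ M.
Proof.
elim: M => // M IHM; rewrite factS expnS leq_mul2l /=.
by rewrite (leq_trans IHM) //; case: M {IHM} => // M; rewrite leq_exp2r.
Qed.

(** * Covering sets contain all units *)

Lemma totient_card n : totient n = #|[set x : 'I_n | coprime n x]|.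
Proof.
rewrite totient_count_coprime big_mkord -sum1dep_card big_mkcond /=.
by rewrite [RHS]big_mkcond; apply: eq_bigr => i _; case: coprime.
Qed.

(* [Defs.covering] is qualified because Stdlib's Reals also exports a [covering]. *)
Lemma leq_fcov n l m :
  m <= n -> (forall B : {set 'I_n}, Defs.covering l B -> m <= #|B|) -> m <= fcov n l.
Proof.
move=> m_n m_B; apply: (big_ind (fun x => m <= x)) => // x y m_x m_y.
by rewrite leq_min m_x m_y.
Qed.

Lemma units_sub_covering n l (B : {set 'I_n}) :
  (forall a, a <= l -> coprime a n -> a = 1) -> Defs.covering l B ->
  [set x : 'I_n | coprime n x] \subset B.
Proof.
move=> small_units cover_B; apply/subsetP => x; rewrite inE => co_x.
move/forallP: cover_B => /(_ x) /existsP[a /existsP[b /andP[b_B /eqP ab_x]]].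
move: co_x; rewrite coprime_sym -ab_x coprime_modl coprimeMl => /andP[co_a _].
have a1 : nat_of_ord a = 1 := small_units _ (ltn_ord a) co_a.
by move: ab_x; rewrite a1 mul1n modn_small // => b_x; rewrite -(val_inj b_x).
Qed.

Lemma totient_le_fcov n l :
  (forall a, a <= l -> coprime a n -> a = 1) -> totient n <= fcov n l.
Proof.
move=> small_units; apply: leq_fcov => [|B /(units_sub_covering small_units)].
  by rewrite totient_card (leq_trans (max_card _)) ?card_ord.
by rewrite totient_card; apply: subset_leq_card.
Qed.

(** * Mertens' estimates *)

Open Scope R_scope.

Lemma INR_expn m k : INR (m ^ k) = INR m ^ k.
Proof. by elim: k => [|k IHk]; rewrite ?expn0 // expnS mult_INR IHk. Qed.

Lemma INR_gt0 n : (0 < n)%N -> 0 < INR n.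
Proof. by move=> /ltP; apply: lt_0_INR. Qed.

Lemma INR_leq m n : (m <= n)%N -> INR m <= INR n.
Proof. by move=> /leP; apply: le_INR. Qed.

Lemma ln_le x y : 0 < x -> x <= y -> ln x <= ln y.
Proof.
move=> x_gt0 /Rle_lt_or_eq_dec[x_y|<-]; last exact: Rle_refl.
by left; apply: ln_increasing.
Qed.

Lemma exp_le x y : x <= y -> exp x <= exp y.
Proof.
move=> /Rle_lt_or_eq_dec[x_y|<-]; last exact: Rle_refl.
by left; apply: exp_increasing.
Qed.

Lemma ln_nat_gt0 n : (2 <= n)%N -> 0 < ln (INR n).
Proof.
move=> n_ge2; rewrite -ln_1; apply: ln_increasing; first lra.
by apply: Rlt_le_trans (INR_leq n_ge2); rewrite /=; lra.
Qed.

(* Concavity of [ln], from [1 + t <= exp t] at [t = ln (y / x)]. *)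
Lemma ln_sub_le x y : 0 < x -> 0 < y -> ln y - ln x <= (y - x) / x.
Proof.
move=> x_gt0 y_gt0; have yx_gt0 : 0 < y / x by apply: Rdiv_lt_0_compat.
have := exp_ineq1_le (ln (y / x)); rewrite exp_ln //.
rewrite /Rdiv ln_mult ?ln_Rinv //; last exact: Rinv_0_lt_compat.
have -> : (y - x) * / x = y * / x - 1 by field; lra.
lra.
Qed.

Fixpoint prime_sum (F : nat -> R) (K : nat) : R :=
  if K is k.+1 then (if prime k.+1 then F k.+1 else 0) + prime_sum F k else 0.

Lemma prime_sumS (F : nat -> R) K :
  prime_sum F K.+1 = (if prime K.+1 then F K.+1 else 0) + prime_sum F K.
Proof. by []. Qed.

Lemma prime_sum_le (F G : nat -> R) K :
  (forall p, prime p -> F p <= G p) -> prime_sum F K <= prime_sum G K.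
Proof.
move=> F_G; elim: K => [|K IHK] /=; first exact: Rle_refl.
by case: ifP => [/F_G|_]; lra.
Qed.

Lemma prime_sumB (F G : nat -> R) K :
  prime_sum (fun p => F p - G p) K = prime_sum F K - prime_sum G K.
Proof. by elim: K => [|K IHK] /=; [|case: ifP => _]; rewrite ?IHK; ring. Qed.

Lemma prime_sumZ a (F : nat -> R) K :
  prime_sum (fun p => a * F p) K = a * prime_sum F K.
Proof. by elim: K => [|K IHK] /=; [|case: ifP => _]; rewrite ?IHK; ring. Qed.

Lemma ln_prod_primes (F : nat -> nat) K : (forall p, prime p -> (0 < F p)%N) ->
  ln (INR (\prod_(0 <= p < K.+1 | prime p) F p)) = prime_sum (fun p => ln (INR (F p))) K.
Proof.
move=> F_gt0; elim: K => [|K IHK]; first by rewrite big_primes0 ln_1.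
have prod_gt0 : (0 < \prod_(0 <= p < K.+1 | prime p) F p)%N.
  by rewrite prodn_cond_gt0.
rewrite big_primesS mult_INR ln_mult ?IHK /=; last exact: INR_gt0.
  by case: ifP => _ //=; rewrite ln_1.
by case: ifP => [/F_gt0|_]; [apply: INR_gt0|rewrite /=; lra].
Qed.

Lemma ln_primorial K : ln (INR (primorial K)) = prime_sum (fun p => ln (INR p)) K.
Proof. by apply: ln_prod_primes => p /prime_gt0. Qed.

Lemma sum_ln_primes_le K : prime_sum (fun p => ln (INR p)) K <= INR K * ln 8.
Proof.
rewrite -ln_primorial -ln_pow; last lra.
apply: ln_le; first by apply: INR_gt0; apply: primorial_gt0.
have -> : 8 = INR 8 by rewrite /=; lra.
by rewrite -INR_expn; apply: INR_leq; apply: primorial_le_exp8.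
Qed.

Lemma div_floor_ge M d : (0 < d)%N -> INR M / INR d - 1 <= INR (M %/ d).
Proof.
move=> d_gt0; have d_pos := INR_gt0 d_gt0.
have mod_lt : INR (M %% d) <= INR d by apply: INR_leq; apply/ltnW/ltn_pmod.
rewrite {1}(divn_eq M d) plus_INR mult_INR.
have -> : (INR (M %/ d) * INR d + INR (M %% d)) / INR d - 1
  = INR (M %/ d) + (INR (M %% d) - INR d) / INR d by field; lra.
have : (INR (M %% d) - INR d) / INR d <= 0.
  by rewrite /Rdiv; have := Rinv_0_lt_compat _ d_pos; nra.
lra.
Qed.

Lemma ln_fact_le M : ln (INR M`!) <= INR M * ln (INR M).
Proof.
case: M => [|M]; first by rewrite /= ln_1; lra.
rewrite -ln_pow; last exact: INR_gt0.
rewrite -INR_expn.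
by apply: ln_le; [apply: INR_gt0; apply: fact_gt0|apply: INR_leq; apply: fact_le_expn].
Qed.

Lemma mertens_first K : (1 <= K)%N ->
  prime_sum (fun p => ln (INR p) / INR p) K <= ln (INR K) + ln 8.
Proof.
move=> K_gt0; have K_pos := INR_gt0 K_gt0.
have floor_sum : INR K * prime_sum (fun p => ln (INR p) / INR p) K
    - prime_sum (fun p => ln (INR p)) K
  <= prime_sum (fun p => INR (K %/ p) * ln (INR p)) K.
  rewrite -prime_sumZ -prime_sumB; apply: prime_sum_le => p pr_p.
  have p_pos := INR_gt0 (prime_gt0 pr_p).
  have ln_p_ge0 : 0 <= ln (INR p).
    by rewrite -ln_1; apply: ln_le; [lra|apply: (INR_leq (prime_gt0 pr_p))].
  have -> : INR K * (ln (INR p) / INR p) - ln (INR p)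
    = (INR K / INR p - 1) * ln (INR p) by field; lra.
  exact: Rmult_le_compat_r (div_floor_ge _ (prime_gt0 pr_p)).
have legendre : prime_sum (fun p => INR (K %/ p) * ln (INR p)) K <= ln (INR K`!).
  have prod_gt0 : (0 < \prod_(0 <= p < K.+1 | prime p) p ^ (K %/ p))%N.
    by rewrite prodn_cond_gt0 // => p /prime_gt0 p_gt0; rewrite expn_gt0 p_gt0.
  apply: Rle_trans (_ : ln (INR (\prod_(0 <= p < K.+1 | prime p) p ^ (K %/ p))) <= _).
    rewrite ln_prod_primes => [|p /prime_gt0 p_gt0]; last by rewrite expn_gt0 p_gt0.
    apply: prime_sum_le => p pr_p; rewrite INR_expn ln_pow; first exact: Rle_refl.
    exact: INR_gt0 (prime_gt0 pr_p).
  apply: ln_le; first exact: INR_gt0.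
  by apply: INR_leq; apply: dvdn_leq (fact_gt0 _) (primes_pow_dvd_fact _ _).
have := sum_ln_primes_le K; have := ln_fact_le K.
move: floor_sum legendre; set A := prime_sum _ K; set T := prime_sum _ K.
move=> *; apply: (Rmult_le_reg_l (INR K)) => //; lra.
Qed.

(* Abel summation of [mertens_first] against the weight [1 / ln t]. *)
Lemma sum_inv_primes_abel K : (2 <= K)%N ->
  prime_sum (fun p => / INR p) K
    - prime_sum (fun p => ln (INR p) / INR p) K / ln (INR K)
  <= ln (ln (INR K)) - ln (ln 2) + ln 8 * (/ ln 2 - / ln (INR K)).
Proof.
move=> K_ge2; have [j -> {K K_ge2}] : exists j, K = j.+2 by exists K.-2; lia.
elim: j => [|j IHj].
  have ln2_pos : 0 < ln 2 by rewrite -ln_1; apply: ln_increasing; lra.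
  rewrite /= (_ : 1 + 1 = 2); last lra.
  have -> : / 2 + (0 + 0) - (ln 2 / 2 + (0 + 0)) / ln 2 = 0 by field; lra.
  lra.
set u := ln (INR j.+2) in IHj *; set v := ln (INR j.+3).
set T := prime_sum _ j.+2 in IHj *; set A := prime_sum _ j.+2 in IHj *.
have u_pos : 0 < u by apply: ln_nat_gt0.
have v_pos : 0 < v by apply: ln_nat_gt0.
have A_le : A <= u + ln 8 by apply: mertens_first.
have inv_uv : / v <= / u.
  by apply: Rinv_le_contravar => //; apply: ln_le; [apply: INR_gt0|apply: INR_leq].
have new_prime : prime_sum (fun p => / INR p) j.+3
    - prime_sum (fun p => ln (INR p) / INR p) j.+3 / v = T - A / v.
  rewrite 2!(prime_sumS _ j.+2) -/T -/A; case: ifP => _; last by field; lra.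
  by rewrite -/v; field; split; [lra|apply: Rgt_not_eq; apply: INR_gt0].
have ratio : u * (/ u - / v) <= ln v - ln u.
  have := ln_sub_le v_pos u_pos.
  have -> : u * (/ u - / v) = - ((u - v) / v) by field; lra.
  lra.
have weight : A * (/ u - / v) <= (u + ln 8) * (/ u - / v).
  by apply: Rmult_le_compat_r; lra.
rewrite new_prime.
have -> : T - A / v = (T - A / u) + A * (/ u - / v) by field; lra.
lra.
Qed.

Definition mertens_const : R := 1 - ln (ln 2) + ln 8 / ln 2.

Lemma mertens_second K : (2 <= K)%N ->
  prime_sum (fun p => / INR p) K <= ln (ln (INR K)) + mertens_const.
Proof.
move=> K_ge2; have := sum_inv_primes_abel K_ge2; have := mertens_first (ltnW K_ge2).
set A := prime_sum _ K; set T := prime_sum _ K; set u := ln (INR K).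
move=> A_le abel; have u_pos : 0 < u := ln_nat_gt0 K_ge2.
have A_div : A / u <= 1 + ln 8 / u.
  have -> : 1 + ln 8 / u = (u + ln 8) / u by field; lra.
  by apply: Rmult_le_compat_r A_le; left; apply: Rinv_0_lt_compat.
by move: abel A_div; rewrite /mertens_const /Rdiv Rmult_minus_distr_l => *; lra.
Qed.

(* [ln (p / (p - 1)) <= 1 / (p - 1) = 1 / p + (1 / (p - 1) - 1 / p)], and the
   brackets telescope to at most [1 - 1 / K]. *)
Lemma sum_ln_ratio_le K : (1 <= K)%N ->
  prime_sum (fun p => ln (INR p) - ln (INR p.-1)) K
  <= prime_sum (fun p => / INR p) K + 1 - / INR K.
Proof.
case: K => // K _; elim: K => [|K IHK]; first by rewrite /= Rinv_1; lra.
rewrite 2!(prime_sumS _ K.+1).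
have K1_pos : 0 < INR K.+1 by apply: INR_gt0.
have K2_pos : 0 < INR K.+2 by apply: INR_gt0.
have inv_le : / INR K.+2 <= / INR K.+1 by apply: Rinv_le_contravar => //; apply: INR_leq.
case: ifP => _; last lra.
have := ln_sub_le K1_pos K2_pos; rewrite -[K.+2.-1]/K.+1.
have -> : (INR K.+2 - INR K.+1) / INR K.+1 = / INR K.+1.
  by rewrite [INR K.+2]S_INR; field; lra.
lra.
Qed.

Lemma totient_primorial_ge K : (2 <= K)%N ->
  INR (primorial K) * exp (- (mertens_const + 1)) / ln (INR K)
  <= INR (totient (primorial K)).
Proof.
move=> K_ge2; have n_pos := INR_gt0 (primorial_gt0 K).
have phi_pos : 0 < INR (totient (primorial K)).
  by apply: INR_gt0; rewrite totient_gt0 primorial_gt0.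
have u_pos := ln_nat_gt0 K_ge2.
set L := prime_sum (fun p => ln (INR p) - ln (INR p.-1)) K.
have phi_eq : INR (totient (primorial K)) = INR (primorial K) * exp (- L).
  have <- : ln (INR (primorial K)) - ln (INR (totient (primorial K))) = L.
    rewrite totient_primorial ln_primorial ln_prod_primes -?prime_sumB // => p.
    by move=> /prime_gt1; case: p.
  by rewrite Ropp_minus_distr /Rminus exp_plus exp_Ropp exp_ln // exp_ln //; field; lra.
have L_le : L <= ln (ln (INR K)) + mertens_const + 1.
  have := sum_ln_ratio_le (ltnW K_ge2); have := mertens_second K_ge2.
  have : 0 < / INR K by apply: Rinv_0_lt_compat; apply: INR_gt0; lia.
  rewrite -/L => *; lra.
have -> : INR (primorial K) * exp (- (mertens_const + 1)) / ln (INR K)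
  = INR (primorial K) * exp (- (mertens_const + 1) - ln (ln (INR K))).
  by rewrite /Rminus exp_plus (exp_Ropp (ln _)) exp_ln //; field; lra.
by rewrite phi_eq; apply: Rmult_le_compat_l; [lra|apply: exp_le; lra].
Qed.

(** * The ratio log n / log log n *)

Lemma exp_exp1_le : exp (exp 1) <= 27.
Proof.
have e_le3 := exp_le_3; have e_pos := exp_pos 1.
apply: Rle_trans (exp_le e_le3) _.
have -> : exp 3 = exp 1 * exp 1 * exp 1 by rewrite -!exp_plus; congr exp; lra.
have : exp 1 * exp 1 <= 9 by nra.
nra.
Qed.

Lemma div_ln_le y Y : exp 1 <= y -> y <= Y -> y / ln y <= Y / ln Y.
Proof.
move=> e_y y_Y; have e_pos := exp_pos 1.
have y_pos : 0 < y by lra.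
have Y_pos : 0 < Y by lra.
have ln_y : 1 <= ln y by rewrite -(ln_exp 1); apply: ln_le.
have ln_Y : ln y <= ln Y by apply: ln_le.
have concave : y * (ln Y - ln y) <= Y - y.
  have -> : Y - y = y * ((Y - y) / y) by field; lra.
  by apply: Rmult_le_compat_l; [lra|apply: ln_sub_le].
have cross : y * ln Y <= Y * ln y by nra.
apply: (Rmult_le_reg_r (ln y * ln Y)); first nra.
have -> : y / ln y * (ln y * ln Y) = y * ln Y by field; lra.
have -> : Y / ln Y * (ln y * ln Y) = Y * ln y by field; lra.
exact: cross.
Qed.

Lemma logm_ratio x : exp (exp 1) <= x -> logm x / logm (logm x) = ln x / ln (ln x).
Proof.
move=> ee_x; have e_pos := exp_pos 1.
have e_ge1 : 1 <= exp 1 by have := exp_ineq1_le 1; lra.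
have ln_x : exp 1 <= ln x by rewrite -(ln_exp (exp 1)); apply: ln_le => //; exact: exp_pos.
have ln_ln_x : 1 <= ln (ln x) by rewrite -(ln_exp 1); apply: ln_le.
by rewrite /logm !Rmax_left //; lra.
Qed.

Lemma logm_ratio_primorial_le K : (27 <= primorial K)%N -> (2 <= K)%N ->
  logm (INR (primorial K)) / logm (logm (INR (primorial K)))
  <= INR K * ln 8 / ln (INR K).
Proof.
move=> n_ge27 K_ge2; set n := INR (primorial K).
have ee_n : exp (exp 1) <= n.
  by rewrite /n; have := INR_leq n_ge27; have := exp_exp1_le; rewrite [INR 27]/= => *; lra.
have e_ln_n : exp 1 <= ln n.
  by rewrite -(ln_exp (exp 1)); apply: ln_le => //; exact: exp_pos.
have theta_le : ln n <= INR K * ln 8 by rewrite /n ln_primorial; apply: sum_ln_primes_le.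
have u_pos := ln_nat_gt0 K_ge2.
have ln8_ge1 : 1 <= ln 8.
  by rewrite -(ln_exp 1); apply: ln_le; [exact: exp_pos|have := exp_le_3; lra].
have ln_Y : ln (INR K) <= ln (INR K * ln 8).
  rewrite ln_mult; [|exact: INR_gt0 (ltnW K_ge2)|lra].
  suff : 0 <= ln (ln 8) by lra.
  by rewrite -ln_1; apply: ln_le; lra.
rewrite logm_ratio //; apply: Rle_trans (div_ln_le e_ln_n theta_le) _.
apply: Rmult_le_compat_l; first by apply: Rmult_le_pos; [apply: pos_INR|lra].
exact: Rinv_le_contravar.
Qed.

Theorem mainTheorem12 :
  exists c : R, (0 < c)%R /\
    forall N : nat, exists n l : nat,
      (N < n)%N /\ (2 <= n)%N /\ (1 <= l)%N /\ (l < n)%N /\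
      (c * (INR n / INR l) * (logm (INR n) / logm (logm (INR n)))
         <= INR (fcov n l))%R.
Proof.
have ln8_pos : 0 < ln 8 by rewrite -ln_1; apply: ln_increasing; lra.
pose c := exp (- (mertens_const + 1)) / ln 8.
exists c; split; first exact: Rdiv_lt_0_compat (exp_pos _) ln8_pos.
move=> N; have [K] := prime_above (maxn N 27); rewrite gtn_max => /andP[N_K K_gt27] pr_K.
have K_ge2 : (2 <= K)%N by lia.
have K_lt_n : (K < primorial K)%N.
  have [k def_K] : exists k, K = k.+1 by exists K.-1; lia.
  rewrite def_K primorial_prime -?def_K //.
  by have := @primorial_gt1 k ltac:(lia); nia.
exists (primorial K), K; do 4 (split; first lia).
have n_ge27 : (27 <= primorial K)%N by lia.
have cn_pos : 0 <= c * (INR (primorial K) / INR K).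
  apply: Rlt_le; apply: Rmult_lt_0_compat; apply: Rdiv_lt_0_compat => //.
  - exact: exp_pos.
  - exact: INR_gt0 (primorial_gt0 K).
  - by apply: INR_gt0; lia.
apply: Rle_trans (Rmult_le_compat_l _ _ _ cn_pos (logm_ratio_primorial_le n_ge27 K_ge2)) _.
apply: Rle_trans (INR_leq (totient_le_fcov (fun a a_K => coprime_primorial_eq1 K_ge2 a_K))).
apply: Rle_trans (totient_primorial_ge K_ge2); right.
have K_pos : 0 < INR K by apply: INR_gt0; lia.
by rewrite /c; field; split; [apply: Rgt_not_eq; apply: ln_nat_gt0|lra].
Qed.
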